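(* Let $n\ge2$. For all $x,y\in\mathbb{B}^n$, $$\tfrac14\rho_{\mathbb{B}^n}(x,y)\le\tilde\tau_{\mathbb{B}^n}(x,y)\le\rho_{\mathbb{B}^n}(x,y)\quad\text{and}\quad \tilde\tau_{\mathbb{B}^n}(x,y)\le\tfrac12\rho_{\mathbb{B}^n}(x,y)+\log\tfrac54,$$ and all these inequalities are sharp: $$\inf_{x\ne y}\frac{\tilde\tau_{\mathbb{B}^n}(x,y)}{\rho_{\mathbb{B}^n}(x,y)}=\tfrac14,\qquad \sup_{x\ne y}\frac{\tilde\tau_{\mathbb{B}^n}(x,y)}{\rho_{\mathbb{B}^n}(x,y)}=1,\qquad \sup_{x,y\in\mathbb{B}^n}\Big(\tilde\tau_{\mathbb{B}^n}(x,y)-\tfrac12\rho_{\mathbb{B}^n}(x,y)\Big)=\log\tfrac54.$$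
   Context: $\mathbb{B}^n=\{z\in\mathbb{R}^n:|z|<1\}$. The hyperbolic metric $\rho_{\mathbb{B}^n}$ is given by $\sinh\frac{\rho_{\mathbb{B}^n}(x,y)}{2}=\frac{|x-y|}{\sqrt{1-|x|^2}\sqrt{1-|y|^2}}$. For a proper subdomain $D\subsetneq\mathbb{R}^n$ and $x,y\in D$, $\tilde\tau_D(x,y)=\log\big(1+\sup_{p\in\partial D}\frac{|x-y|}{\sqrt{|x-p||y-p|}}\big)$ (the scale invariant Cassinian metric). *)

From Stdlib Require Import Reals Lra Lia ClassicalEpsilon.
Open Scope R_scope.

(* A point of R^n is represented by its coordinate function nat -> R;
   only the coordinates 0..n-1 are relevant. *)
Fixpoint sqnorm (n : nat) (x : nat -> R) : R :=
  match n with
  | O => 0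
  | S m => sqnorm m x + x m ^ 2
  end.

Definition norm (n : nat) (x : nat -> R) : R := sqrt (sqnorm n x).

Definition edist (n : nat) (x y : nat -> R) : R := norm n (fun i => x i - y i).

Definition in_ball (n : nat) (x : nat -> R) : Prop := norm n x < 1.
Definition on_sphere (n : nat) (p : nat -> R) : Prop := norm n p = 1.

Definition rho_ball (n : nat) (x y : nat -> R) : R :=
  2 * arcsinh (edist n x y /
               (sqrt (1 - norm n x ^ 2) * sqrt (1 - norm n y ^ 2))).

Definition Rsup (E : R -> Prop) : R :=
  epsilon (inhabits 0) (fun s => is_lub E s).

Definition is_glb (E : R -> Prop) (m : R) : Prop :=
  (forall r, E r -> m <= r) /\ (forall b, (forall r, E r -> b <= r) -> b <= m).

Definition tau_tilde_ball (n : nat) (x y : nat -> R) : R :=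
  ln (1 + Rsup (fun r => exists p, on_sphere n p /\
                  r = edist n x y / sqrt (edist n x p * edist n y p))).

(* Write A = sinh(rho/2) = |x-y| / (sqrt(1-|x|^2) sqrt(1-|y|^2)) and S for the
   supremum over the unit sphere of |x-y| / sqrt(|x-p||y-p|), so that
   rho = 2 arcsinh A and tau~ = ln(1 + S).
   - Upper bounds: |x-p| >= 1-|x| gives S <= 2A, and 1 + 2A is at most both
     exp(arcsinh A)^2 and (5/4) exp(arcsinh A).
   - Lower bound: for |y| <= |x| the boundary point p = x/|x| gives
     S >= d / sqrt(u (d+u)) with u = 1-|x| and d = |x-y|; an elementary
     computation turns this into exp(arcsinh A) <= (1+S)^2, i.e. rho <= 4 tau~.
   - Sharpness: antipodal points +-t with t -> 1 push tau~/rho down to 1/4;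
     two close radial points near the boundary push it up to 1; radial points
     at distances a and 4a from the boundary, a -> 0, push tau~ - rho/2 up to
     ln(5/4). *)

From Stdlib Require Import Reals Lra Lia Psatz ClassicalEpsilon.
Open Scope R_scope.

Lemma le_of_sq_le x y : 0 <= y -> x ^ 2 <= y ^ 2 -> x <= y.
Proof. intros. nra. Qed.

Lemma sqrt_le_of_le_sq a b : 0 <= b -> a <= b ^ 2 -> sqrt a <= b.
Proof. intros Hb H. rewrite <- (sqrt_pow2 b Hb). apply sqrt_le_1_alt; lra. Qed.

Lemma le_sqrt_of_sq_le a b : 0 <= b -> b ^ 2 <= a -> b <= sqrt a.
Proof. intros Hb H. rewrite <- (sqrt_pow2 b Hb). apply sqrt_le_1_alt; lra. Qed.

Lemma div_nonneg a b : 0 <= a -> 0 <= b -> 0 <= a / b.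
Proof.
  intros Ha [Hb | <-]; [apply Rmult_le_pos; [lra | left; apply Rinv_0_lt_compat; lra] |].
  rewrite Rdiv_0_r; lra.
Qed.

Lemma div_le_den a X Y : 0 <= a -> 0 < Y -> Y <= X -> a / X <= a / Y.
Proof. intros. apply Rmult_le_compat_l; auto. apply Rinv_le_contravar; auto. Qed.

Lemma le_div M t r : 0 < r -> M * r <= t -> M <= t / r.
Proof.
  intros Hr H. apply Rmult_le_reg_r with r; auto.
  unfold Rdiv. rewrite Rmult_assoc, Rinv_l; lra.
Qed.

Lemma div_le M t r : 0 < r -> t <= M * r -> t / r <= M.
Proof.
  intros Hr H. apply Rmult_le_reg_r with r; auto.
  unfold Rdiv. rewrite Rmult_assoc, Rinv_l; lra.
Qed.

Lemma lt_div M t r : 0 < r -> M * r < t -> M < t / r.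
Proof.
  intros Hr H. apply Rmult_lt_reg_r with r; auto.
  unfold Rdiv. rewrite Rmult_assoc, Rinv_l; lra.
Qed.

Lemma div_lt M t r : 0 < r -> t < M * r -> t / r < M.
Proof.
  intros Hr H. apply Rmult_lt_reg_r with r; auto.
  unfold Rdiv. rewrite Rmult_assoc, Rinv_l; lra.
Qed.

Lemma ln_le x y : 0 < x -> x <= y -> ln x <= ln y.
Proof. intros Hx [Hxy | <-]; [left; apply ln_increasing |]; lra. Qed.

Lemma ln_le_sub1 y : 0 < y -> ln y <= y - 1.
Proof. intros Hy. pose proof (exp_ineq1_le (ln y)) as H. rewrite exp_ln in H; lra. Qed.

Lemma frac_le_ln s : 0 <= s -> s / (1 + s) <= ln (1 + s).
Proof.
  intros Hs.
  assert (Hinv : 0 < / (1 + s)) by (apply Rinv_0_lt_compat; lra).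
  pose proof (ln_le_sub1 _ Hinv) as H. rewrite ln_Rinv in H by lra.
  replace (s / (1 + s)) with (1 - / (1 + s)) by (field; lra). lra.
Qed.

(* exp (arcsinh A) = A + sqrt (A^2 + 1); the library defines arcsinh as its
   logarithm, so estimates on arcsinh reduce to estimates on this quantity. *)
Definition exp_arcsinh (A : R) : R := A + sqrt (A ^ 2 + 1).

Lemma arcsinh_ln A : arcsinh A = ln (exp_arcsinh A).
Proof. reflexivity. Qed.

Lemma exp_arcsinh_ge1 A : 0 <= A -> 1 <= exp_arcsinh A.
Proof.
  intros HA. unfold exp_arcsinh.
  assert (1 <= sqrt (A ^ 2 + 1)) by (apply le_sqrt_of_sq_le; nra). lra.
Qed.

Lemma exp_arcsinh_ge_2A A : 0 <= A -> 2 * A <= exp_arcsinh A.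
Proof.
  intros HA. unfold exp_arcsinh.
  assert (A <= sqrt (A ^ 2 + 1)) by (apply le_sqrt_of_sq_le; lra). lra.
Qed.

(* exp (arcsinh A) <= K as soon as A <= sinh (ln K) = (K - 1/K) / 2. *)
Lemma exp_arcsinh_le A K :
  0 <= A -> 1 <= K -> 2 * A * K <= K ^ 2 - 1 -> exp_arcsinh A <= K.
Proof.
  intros HA HK H. unfold exp_arcsinh.
  assert (A < K) by nra.
  assert (sqrt (A ^ 2 + 1) <= K - A) by (apply sqrt_le_of_le_sq; nra). lra.
Qed.

Lemma arcsinh_le_quad A : 0 <= A -> arcsinh A <= A + A ^ 2 / 2.
Proof.
  intros HA. rewrite arcsinh_ln.
  pose proof (exp_arcsinh_ge1 A HA).
  pose proof (ln_le_sub1 (exp_arcsinh A) ltac:(lra)).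
  assert (sqrt (A ^ 2 + 1) <= 1 + A ^ 2 / 2) by (apply sqrt_le_of_le_sq; nra).
  unfold exp_arcsinh in *. lra.
Qed.

Lemma ln_1p_le_arcsinh A S : 0 <= A -> 0 <= S -> S <= 2 * A ->
  ln (1 + S) <= 2 * arcsinh A /\ ln (1 + S) <= arcsinh A + ln (5 / 4).
Proof.
  intros HA HS HSA. rewrite arcsinh_ln.
  pose proof (exp_arcsinh_ge1 A HA). pose proof (exp_arcsinh_ge_2A A HA).
  assert (Hr2 : sqrt (A ^ 2 + 1) ^ 2 = A ^ 2 + 1) by (apply pow2_sqrt; nra).
  unfold exp_arcsinh in *. set (r := sqrt (A ^ 2 + 1)) in *.
  split.
  - replace (2 * ln (A + r)) with (ln ((A + r) * (A + r))) by (rewrite ln_mult; lra).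
    apply ln_le; nra.
  - rewrite <- ln_mult by lra. apply ln_le; [lra |].
    assert (4 + 3 * A <= 5 * r).
    { apply le_of_sq_le; [lra |]. pose proof (pow2_ge_0 (4 * A - 3)). nra. }
    lra.
Qed.

Fixpoint dot (n : nat) (u v : nat -> R) : R :=
  match n with
  | O => 0
  | S m => dot m u v + u m * v m
  end.

Lemma sqnorm_succ m u : sqnorm (S m) u = sqnorm m u + u m ^ 2.
Proof. reflexivity. Qed.

Lemma sqnorm_nonneg n u : 0 <= sqnorm n u.
Proof.
  induction n as [|n IH]; cbn [sqnorm]; [lra |].
  pose proof (pow2_ge_0 (u n)). lra.
Qed.

Lemma sqnorm_ext n u v : (forall i, u i ^ 2 = v i ^ 2) -> sqnorm n u = sqnorm n v.
Proof.
  intros H. induction n as [|n IH]; cbn [sqnorm]; [reflexivity |].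
  rewrite IH, H. reflexivity.
Qed.

Lemma sqnorm_comb n a b u v :
  sqnorm n (fun i => a * u i + b * v i) =
  a ^ 2 * sqnorm n u + 2 * a * b * dot n u v + b ^ 2 * sqnorm n v.
Proof. induction n as [|n IH]; cbn [sqnorm dot]; [ring |]. rewrite IH. ring. Qed.

Lemma sqnorm_scale n c u : sqnorm n (fun i => c * u i) = c ^ 2 * sqnorm n u.
Proof. induction n as [|n IH]; cbn [sqnorm]; [ring |]. rewrite IH. ring. Qed.

Lemma cauchy_schwarz n u v : dot n u v ^ 2 <= sqnorm n u * sqnorm n v.
Proof.
  induction n as [|n IH]; cbn [sqnorm dot]; [lra |].
  set (D := dot n u v) in *. set (su := sqnorm n u) in *. set (sv := sqnorm n v) in *.
  assert (Hsu : 0 <= su) by apply sqnorm_nonneg.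
  assert (Hsv : 0 <= sv) by apply sqnorm_nonneg.
  set (a := u n). set (b := v n).
  assert (Hcross : 2 * D * a * b <= su * b ^ 2 + sv * a ^ 2).
  { apply le_of_sq_le; [nra |].
    assert (D ^ 2 * (a * b) ^ 2 <= su * sv * (a * b) ^ 2)
      by (apply Rmult_le_compat_r; [nra | lra]).
    pose proof (pow2_ge_0 (su * b ^ 2 - sv * a ^ 2)). nra. }
  nra.
Qed.

Lemma norm_sq n u : norm n u ^ 2 = sqnorm n u.
Proof. apply pow2_sqrt, sqnorm_nonneg. Qed.

Lemma norm_nonneg n u : 0 <= norm n u.
Proof. apply sqrt_pos. Qed.

Lemma edist_nonneg n x y : 0 <= edist n x y.
Proof. apply sqrt_pos. Qed.

Lemma norm_triangle n u v : norm n (fun i => u i + v i) <= norm n u + norm n v.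
Proof.
  pose proof (norm_nonneg n u). pose proof (norm_nonneg n v).
  apply sqrt_le_of_le_sq; [lra |].
  rewrite (sqnorm_ext n _ (fun i => 1 * u i + 1 * v i)) by (intros; ring).
  rewrite sqnorm_comb, <- (norm_sq n u), <- (norm_sq n v).
  assert (dot n u v <= norm n u * norm n v).
  { apply le_of_sq_le; [nra |]. rewrite Rpow_mult_distr, !norm_sq. apply cauchy_schwarz. }
  nra.
Qed.

Lemma edist_sym n x y : edist n x y = edist n y x.
Proof. unfold edist, norm. f_equal. apply sqnorm_ext. intros; ring. Qed.

Lemma edist_triangle n x y z : edist n x z <= edist n x y + edist n y z.
Proof.
  unfold edist. rewrite <- (norm_triangle n (fun i => x i - y i) (fun i => y i - z i)).
  unfold norm. rewrite (sqnorm_ext n (fun i => x i - z i) (fun i => x i - y i + (y i - z i)))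
    by (intros; ring).
  lra.
Qed.

Lemma norm_edist0 n x : norm n x = edist n x (fun _ => 0).
Proof. unfold edist, norm. f_equal. apply sqnorm_ext. intros; ring. Qed.

Lemma edist_to_sphere n x p : on_sphere n p -> 1 - norm n x <= edist n x p.
Proof.
  intros Hp. unfold on_sphere in Hp.
  pose proof (edist_triangle n p x (fun _ => 0)) as H.
  rewrite <- !norm_edist0, Hp, edist_sym in H. lra.
Qed.

Lemma radial_projection n x : 0 < norm n x <= 1 ->
  on_sphere n (fun i => x i / norm n x) /\
  edist n x (fun i => x i / norm n x) = 1 - norm n x.
Proof.
  intros [Ha Ha1]. set (a := norm n x) in *. split.
  - unfold on_sphere, norm at 1.
    rewrite (sqnorm_ext n _ (fun i => / a * x i)) by (intros; unfold Rdiv; ring).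
    rewrite sqnorm_scale, <- norm_sq. fold a.
    replace ((/ a) ^ 2 * a ^ 2) with 1 by (field; lra). apply sqrt_1.
  - unfold edist, norm at 1.
    rewrite (sqnorm_ext n _ (fun i => (1 - / a) * x i)) by (intros; unfold Rdiv; ring).
    rewrite sqnorm_scale, <- norm_sq. fold a.
    replace ((1 - / a) ^ 2 * a ^ 2) with ((1 - a) ^ 2) by (field; lra).
    apply sqrt_pow2; lra.
Qed.

Lemma coord0_sq_le m p : p 0%nat ^ 2 <= sqnorm (S m) p.
Proof.
  induction m as [|m IH]; rewrite sqnorm_succ; [cbn [sqnorm]; lra |].
  pose proof (pow2_ge_0 (p (S m))). lra.
Qed.

Definition axis (c : R) : nat -> R := fun i => if Nat.eqb i 0 then c else 0.

Lemma sqnorm_axis m c : sqnorm (S m) (axis c) = c ^ 2.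
Proof.
  induction m as [|m IH]; [unfold axis; simpl; ring |].
  rewrite sqnorm_succ, IH. unfold axis; simpl; ring.
Qed.

Lemma sqnorm_axis_sub m c p :
  sqnorm (S m) (fun i => axis c i - p i) = c ^ 2 - 2 * c * p 0%nat + sqnorm (S m) p.
Proof.
  induction m as [|m IH]; [unfold axis; simpl; ring |].
  rewrite !(sqnorm_succ (S m)), IH. unfold axis; simpl; ring.
Qed.

Definition hyp_sinh (n : nat) (x y : nat -> R) : R :=
  edist n x y / (sqrt (1 - norm n x ^ 2) * sqrt (1 - norm n y ^ 2)).

Definition cass_ratio (n : nat) (x y p : nat -> R) : R :=
  edist n x y / sqrt (edist n x p * edist n y p).

Definition cass_sup (n : nat) (x y : nat -> R) : R :=
  Rsup (fun r => exists p, on_sphere n p /\ r = cass_ratio n x y p).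

Lemma rho_ball_arcsinh n x y : rho_ball n x y = 2 * arcsinh (hyp_sinh n x y).
Proof. reflexivity. Qed.

Lemma tau_tilde_cass n x y : tau_tilde_ball n x y = ln (1 + cass_sup n x y).
Proof. reflexivity. Qed.

Lemma hyp_sinh_nonneg n x y : 0 <= hyp_sinh n x y.
Proof. apply div_nonneg; [apply edist_nonneg | apply Rmult_le_pos; apply sqrt_pos]. Qed.

Lemma hyp_sinh_sym n x y : hyp_sinh n y x = hyp_sinh n x y.
Proof. unfold hyp_sinh. rewrite edist_sym, Rmult_comm. reflexivity. Qed.

Lemma hyp_sinh_pos n x y :
  in_ball n x -> in_ball n y -> 0 < edist n x y -> 0 < hyp_sinh n x y.
Proof.
  unfold in_ball. intros Hx Hy Hd.
  pose proof (norm_nonneg n x). pose proof (norm_nonneg n y).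
  apply Rdiv_lt_0_compat; [lra |].
  apply Rmult_lt_0_compat; apply sqrt_lt_R0; nra.
Qed.

Lemma rho_ball_pos n x y :
  in_ball n x -> in_ball n y -> 0 < edist n x y -> 0 < rho_ball n x y.
Proof.
  intros Hx Hy Hd. rewrite rho_ball_arcsinh.
  pose proof (arcsinh_lt _ _ (hyp_sinh_pos n x y Hx Hy Hd)) as H.
  rewrite arcsinh_0 in H. lra.
Qed.

(* Each Cassinian ratio is at most 2 sinh(rho/2), because
   |x-p||y-p| >= (1-|x|)(1-|y|) >= (1-|x|^2)(1-|y|^2)/4. *)
Lemma cass_ratio_le_2sinh n x y p :
  in_ball n x -> in_ball n y -> on_sphere n p -> cass_ratio n x y p <= 2 * hyp_sinh n x y.
Proof.
  unfold in_ball, cass_ratio, hyp_sinh. intros Hx Hy Hp.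
  pose proof (edist_to_sphere n x p Hp). pose proof (edist_to_sphere n y p Hp).
  pose proof (norm_nonneg n x). pose proof (norm_nonneg n y).
  pose proof (edist_nonneg n x y).
  set (a := norm n x) in *. set (b := norm n y) in *.
  set (u := edist n x p) in *. set (v := edist n y p) in *.
  assert (Ha2 : 0 < 1 - a ^ 2) by nra. assert (Hb2 : 0 < 1 - b ^ 2) by nra.
  set (Y := sqrt (1 - a ^ 2) * sqrt (1 - b ^ 2)).
  assert (HY : 0 < Y) by (apply Rmult_lt_0_compat; apply sqrt_lt_R0; lra).
  assert (HYuv : Y <= 2 * sqrt (u * v)).
  { apply le_of_sq_le; [pose proof (sqrt_pos (u * v)); lra |].
    unfold Y. rewrite !Rpow_mult_distr, !pow2_sqrt by nra.
    assert ((1 - a) * (1 - b) <= u * v) by (apply Rmult_le_compat; lra).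
    assert ((1 + a) * (1 + b) <= 4) by nra.
    assert (0 <= (1 - a) * (1 - b)) by nra.
    replace ((1 - a ^ 2) * (1 - b ^ 2)) with (((1 - a) * (1 - b)) * ((1 + a) * (1 + b)))
      by ring.
    nra. }
  replace (2 * (edist n x y / Y)) with (edist n x y / (Y / 2)) by (field; lra).
  apply div_le_den; lra.
Qed.

Lemma hyp_sinh_mul_le n x y :
  norm n y <= norm n x < 1 -> hyp_sinh n x y * (1 - norm n x ^ 2) <= edist n x y.
Proof.
  intros [Hyx Hx]. unfold hyp_sinh.
  pose proof (norm_nonneg n y). pose proof (edist_nonneg n x y).
  set (a := norm n x) in *. set (b := norm n y) in *.
  assert (Hq : 0 < sqrt (1 - a ^ 2)) by (apply sqrt_lt_R0; nra).
  assert (Hq2 : sqrt (1 - a ^ 2) ^ 2 = 1 - a ^ 2) by (apply pow2_sqrt; nra).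
  assert (sqrt (1 - a ^ 2) <= sqrt (1 - b ^ 2)) by (apply sqrt_le_1_alt; nra).
  rewrite <- Rmult_div_swap.
  apply div_le; [apply Rmult_lt_0_compat; lra |].
  apply Rmult_le_compat_l; [lra |]. nra.
Qed.

(* Scalar core of the lower bound: with u = 1 - |x| and d = |x - y|, the
   inequality A u (2 - u) <= d forces exp(arcsinh A) <= (u + d)/u, and
   (u + d)/u <= (1 + d / sqrt(u (d + u)))^2. *)
Lemma exp_arcsinh_le_radial u d A :
  0 < u -> 0 < d -> d <= 2 - 2 * u -> 0 <= A -> A * (u * (2 - u)) <= d ->
  exp_arcsinh A <= (1 + d / sqrt (u * (d + u))) ^ 2.
Proof.
  intros Hu Hd Hdu HA HAd.
  set (K := (u + d) / u).
  assert (HKu : K * u = u + d) by (unfold K; field; lra).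
  assert (HexpK : exp_arcsinh A <= K).
  { apply exp_arcsinh_le; [lra | nra |].
    apply (Rmult_le_reg_r (u ^ 2 * (2 - u))); [nra |].
    replace (2 * A * K * (u ^ 2 * (2 - u))) with (2 * (A * (u * (2 - u))) * (K * u))
      by ring.
    replace ((K ^ 2 - 1) * (u ^ 2 * (2 - u))) with (((K * u) ^ 2 - u ^ 2) * (2 - u))
      by ring.
    rewrite HKu.
    assert (0 <= d * u * (2 - 2 * u - d)) by (apply Rmult_le_pos; nra).
    nra. }
  set (w := sqrt (u * (d + u))).
  assert (Hw2 : w ^ 2 = u * (d + u)) by (apply pow2_sqrt; nra).
  assert (Huw : u <= w) by (apply le_sqrt_of_sq_le; nra).
  assert (HK : K = ((u + d) / w) ^ 2).
  { unfold Rdiv. rewrite Rpow_mult_distr, pow_inv, Hw2. unfold K. field. lra. }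
  assert (((u + d) / w) ^ 2 <= (1 + d / w) ^ 2).
  { apply pow_incr. split; [apply div_nonneg; lra |].
    replace (1 + d / w) with ((w + d) / w) by (field; lra).
    apply Rmult_le_compat_r; [left; apply Rinv_0_lt_compat |]; lra. }
  lra.
Qed.

Lemma is_lub_of_approx (E : R -> Prop) m :
  (forall r, E r -> r <= m) -> (forall M, M < m -> exists r, E r /\ M < r) -> is_lub E m.
Proof.
  intros Hub Happ. split; [exact Hub |]. intros b Hb.
  destruct (Rle_or_lt m b) as [| Hlt]; [assumption |].
  destruct (Happ b Hlt) as [r [Er Hr]]. specialize (Hb r Er). lra.
Qed.

Lemma is_glb_of_approx (E : R -> Prop) m :
  (forall r, E r -> m <= r) -> (forall M, m < M -> exists r, E r /\ r < M) -> is_glb E m.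
Proof.
  intros Hlb Happ. split; [exact Hlb |]. intros b Hb.
  destruct (Rle_or_lt b m) as [| Hlt]; [assumption |].
  destruct (Happ b Hlt) as [r [Er Hr]]. specialize (Hb r Er). lra.
Qed.

Definition ratio_set (n : nat) (r : R) : Prop :=
  exists x y, in_ball n x /\ in_ball n y /\ edist n x y <> 0 /\
    r = tau_tilde_ball n x y / rho_ball n x y.

Definition gap_set (n : nat) (r : R) : Prop :=
  exists x y, in_ball n x /\ in_ball n y /\
    r = tau_tilde_ball n x y - / 2 * rho_ball n x y.

(* Scalar core of the sharpness of tau <= rho for nearby radial points at
   distances h and h (1+h)^2 from the boundary: then A <= c and S >= s with
   s ~ 2h and c ~ h, so rho ~ 2 A and tau ~ s. *)
Lemma near_one_scalar M h A S :
  0 <= M -> 0 < h <= / 8 -> 20 * h <= 1 - M -> 0 <= A ->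
  A <= ((1 + h) ^ 2 - 1) / (1 + h) / (2 - h * (1 + h) ^ 2) ->
  ((1 + h) ^ 2 - 1) / (1 + h) <= S ->
  M * (2 * arcsinh A) < ln (1 + S).
Proof.
  intros HM Hh HhM HA HAc HsS.
  set (s := ((1 + h) ^ 2 - 1) / (1 + h)) in *.
  set (b := h * (1 + h) ^ 2) in *.
  assert (Hs : s = h * (2 + h) / (1 + h)) by (unfold s; field; lra).
  assert (Hs0 : 0 < s) by (rewrite Hs; apply Rdiv_lt_0_compat; nra).
  assert (Hs2 : s <= 2 * h) by (rewrite Hs; apply div_le; nra).
  assert (Hb : b <= 2 * h) by (unfold b; nra).
  set (c := s / (2 - b)) in *.
  assert (Hc0 : 0 < c) by (unfold c; apply Rdiv_lt_0_compat; lra).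
  assert (Hcs : c <= s) by (unfold c; apply div_le; nra).
  assert (Hrho : 2 * arcsinh A <= c * (2 + c)).
  { pose proof (arcsinh_le_quad A HA). nra. }
  assert (Htau : c * (2 - b) / (1 + s) <= ln (1 + S)).
  { replace (c * (2 - b)) with s by (unfold c; field; lra).
    apply Rle_trans with (ln (1 + s)); [apply frac_le_ln; lra | apply ln_le; lra]. }
  assert (Hmargin : M * (c * (2 + c)) < c * (2 - b) / (1 + s)).
  { apply lt_div; [lra |].
    assert ((2 + c) * (1 + s) <= 2 + 7 * h) by nra.
    assert (M * ((2 + c) * (1 + s)) < 2 - b) by nra.
    replace (M * (c * (2 + c)) * (1 + s)) with (c * (M * ((2 + c) * (1 + s)))) by ring.
    apply Rmult_lt_compat_l; lra. }
  nra.
Qed.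

(* From here on the dimension is fixed; only n >= 1 (a nonempty sphere) is
   needed. *)
Section Ball.
Variable n : nat.
Hypothesis hn : (1 <= n)%nat.

Lemma norm_axis c : norm n (axis c) = Rabs c.
Proof.
  destruct n as [|m]; [lia |]. unfold norm. rewrite sqnorm_axis, <- Rsqr_pow2.
  apply sqrt_Rsqr_abs.
Qed.

Lemma edist_axis s t : edist n (axis s) (axis t) = Rabs (s - t).
Proof.
  rewrite <- norm_axis. unfold edist, norm. f_equal. apply sqnorm_ext.
  intros [|i]; unfold axis; simpl; ring.
Qed.

Lemma edist_axis_sphere t p : on_sphere n p ->
  edist n (axis t) p = sqrt (t ^ 2 - 2 * t * p 0%nat + 1).
Proof.
  unfold on_sphere. intros Hp. unfold edist, norm.
  destruct n as [|m]; [lia |].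
  rewrite sqnorm_axis_sub, <- norm_sq, Hp. f_equal. ring.
Qed.

Lemma sphere_axis1 : on_sphere n (axis 1).
Proof. unfold on_sphere. rewrite norm_axis. apply Rabs_R1. Qed.

Lemma sphere_coord0_sq p : on_sphere n p -> p 0%nat ^ 2 <= 1.
Proof.
  unfold on_sphere. intros Hp. destruct n as [|m]; [lia |].
  replace 1 with (norm (S m) p ^ 2) by (rewrite Hp; ring).
  rewrite norm_sq. apply coord0_sq_le.
Qed.

(* The sphere is nonempty and all ratios are bounded by 2 sinh(rho/2), so
   cass_sup is a genuine least upper bound. *)
Lemma cass_sup_lub x y : in_ball n x -> in_ball n y ->
  is_lub (fun r => exists p, on_sphere n p /\ r = cass_ratio n x y p) (cass_sup n x y).
Proof.
  intros Hx Hy. unfold cass_sup, Rsup. apply epsilon_spec.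
  destruct (completeness (fun r => exists p, on_sphere n p /\ r = cass_ratio n x y p))
    as [m Hm].
  - exists (2 * hyp_sinh n x y). intros r [p [Hp ->]]. apply cass_ratio_le_2sinh; auto.
  - exists (cass_ratio n x y (axis 1)), (axis 1). split; [apply sphere_axis1 | reflexivity].
  - exists m; exact Hm.
Qed.

Lemma cass_sup_ge x y p : in_ball n x -> in_ball n y -> on_sphere n p ->
  cass_ratio n x y p <= cass_sup n x y.
Proof. intros Hx Hy Hp. apply (cass_sup_lub x y Hx Hy). exists p; auto. Qed.

Lemma cass_sup_le x y c : in_ball n x -> in_ball n y ->
  (forall p, on_sphere n p -> cass_ratio n x y p <= c) -> cass_sup n x y <= c.
Proof. intros Hx Hy H. apply (cass_sup_lub x y Hx Hy). intros r [p [Hp ->]]. auto. Qed.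

Lemma cass_sup_nonneg x y : in_ball n x -> in_ball n y -> 0 <= cass_sup n x y.
Proof.
  intros Hx Hy. apply Rle_trans with (cass_ratio n x y (axis 1)).
  - apply div_nonneg; [apply edist_nonneg | apply sqrt_pos].
  - apply cass_sup_ge; auto. apply sphere_axis1.
Qed.

Lemma cass_sup_le_2sinh x y : in_ball n x -> in_ball n y ->
  cass_sup n x y <= 2 * hyp_sinh n x y.
Proof. intros Hx Hy. apply cass_sup_le; auto. intros; apply cass_ratio_le_2sinh; auto. Qed.

Lemma cass_sup_sym x y : in_ball n x -> in_ball n y -> cass_sup n y x = cass_sup n x y.
Proof.
  assert (Hle : forall x y, in_ball n x -> in_ball n y -> cass_sup n y x <= cass_sup n x y).
  { intros x' y' Hx Hy. apply cass_sup_le; auto. intros p Hp. unfold cass_ratio.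
    rewrite (edist_sym n y' x'), Rmult_comm. apply cass_sup_ge; auto. }
  intros Hx Hy. apply Rle_antisym; apply Hle; auto.
Qed.

(* Lower bound for |y| <= |x|: take the boundary point p = x/|x| closest to x. *)
Lemma exp_arcsinh_le_cass_ordered x y : in_ball n x -> in_ball n y ->
  norm n y <= norm n x -> 0 < edist n x y ->
  exp_arcsinh (hyp_sinh n x y) <= (1 + cass_sup n x y) ^ 2.
Proof.
  intros Hx Hy Hyx Hd. unfold in_ball in Hx, Hy.
  set (d := edist n x y) in *.
  assert (Hda : d <= norm n x + norm n y).
  { unfold d. rewrite !norm_edist0, (edist_sym n y). apply edist_triangle. }
  assert (Ha : 0 < norm n x) by lra.
  destruct (radial_projection n x ltac:(lra)) as [Hp Hu].
  set (p := fun i => x i / norm n x) in *.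
  set (u := 1 - norm n x) in *.
  assert (Hudef : u = 1 - norm n x) by reflexivity.
  assert (Hu0 : 0 < u) by lra.
  assert (Hv0 : 1 - norm n y <= edist n y p) by (apply edist_to_sphere; auto).
  assert (Hv : edist n y p <= d + u).
  { rewrite <- Hu. unfold d. rewrite (edist_sym n x y). apply edist_triangle. }
  assert (Hratio : d / sqrt (u * (d + u)) <= cass_sup n x y).
  { apply Rle_trans with (cass_ratio n x y p); [| apply cass_sup_ge; auto].
    unfold cass_ratio. fold d. rewrite Hu.
    apply div_le_den; [lra | | apply sqrt_le_1_alt]; [apply sqrt_lt_R0 |]; nra. }
  apply Rle_trans with ((1 + d / sqrt (u * (d + u))) ^ 2).
  - apply exp_arcsinh_le_radial; [lra | lra | lra | apply hyp_sinh_nonneg |].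
    replace (u * (2 - u)) with (1 - norm n x ^ 2) by (rewrite Hudef; ring).
    apply hyp_sinh_mul_le; lra.
  - apply pow_incr. split; [| lra].
    pose proof (div_nonneg d (sqrt (u * (d + u))) ltac:(lra) (sqrt_pos _)). lra.
Qed.

(* The lower bound rho/4 <= tau, i.e. exp(arcsinh A) <= (1 + S)^2; by symmetry
   of both metrics we may assume |y| <= |x|. *)
Lemma quarter_rho_le_tau x y : in_ball n x -> in_ball n y ->
  / 4 * rho_ball n x y <= tau_tilde_ball n x y.
Proof.
  intros Hx Hy. rewrite rho_ball_arcsinh, tau_tilde_cass.
  pose proof (cass_sup_nonneg x y Hx Hy) as HS.
  destruct (Rle_lt_or_eq_dec 0 (edist n x y) (edist_nonneg n x y)) as [Hd | Hd].
  - assert (HE : exp_arcsinh (hyp_sinh n x y) <= (1 + cass_sup n x y) ^ 2).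
    { destruct (Rle_or_lt (norm n y) (norm n x)).
      - apply exp_arcsinh_le_cass_ordered; auto.
      - rewrite <- hyp_sinh_sym, <- (cass_sup_sym x y) by auto.
        apply exp_arcsinh_le_cass_ordered; auto; [lra | rewrite edist_sym; auto]. }
    pose proof (exp_arcsinh_ge1 _ (hyp_sinh_nonneg n x y)).
    apply ln_le in HE; [| lra]. rewrite ln_pow in HE by lra. simpl INR in HE.
    rewrite arcsinh_ln. lra.
  - replace (hyp_sinh n x y) with 0 by (unfold hyp_sinh; rewrite <- Hd; unfold Rdiv; ring).
    rewrite arcsinh_0.
    assert (0 <= ln (1 + cass_sup n x y)) by (rewrite <- ln_1; apply ln_le; lra). lra.
Qed.

(* The two upper bounds follow from S <= 2A. *)
Lemma tau_upper_bounds x y : in_ball n x -> in_ball n y ->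
  tau_tilde_ball n x y <= rho_ball n x y /\
  tau_tilde_ball n x y <= / 2 * rho_ball n x y + ln (5 / 4).
Proof.
  intros Hx Hy. rewrite rho_ball_arcsinh, tau_tilde_cass.
  destruct (ln_1p_le_arcsinh (hyp_sinh n x y) (cass_sup n x y)) as [H1 H2].
  - apply hyp_sinh_nonneg.
  - apply cass_sup_nonneg; auto.
  - apply cass_sup_le_2sinh; auto.
  - split; lra.
Qed.

Lemma in_ball_axis c : Rabs c < 1 -> in_ball n (axis c).
Proof. unfold in_ball. rewrite norm_axis. auto. Qed.

(* Two points on a radius, at distances a and a q^2 from the boundary: the
   boundary point axis 1 gives S >= (q^2 - 1)/q, while A is explicit. *)
Lemma radial_pair a q : 0 < a -> 1 < q -> a * q ^ 2 < 1 ->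
  let x := axis (1 - a) in let y := axis (1 - a * q ^ 2) in
  in_ball n x /\ in_ball n y /\ edist n x y = a * q ^ 2 - a /\
  (q ^ 2 - 1) / q <= cass_sup n x y /\
  hyp_sinh n x y <= (q ^ 2 - 1) / q / (2 - a * q ^ 2).
Proof.
  intros Ha Hq Hb x y. set (b := a * q ^ 2) in *.
  assert (Hbdef : b = a * q ^ 2) by reflexivity. clearbody b.
  assert (Hq2 : 1 < q ^ 2) by nra.
  assert (Hab : a < b) by (rewrite Hbdef; nra).
  assert (Nx : norm n x = 1 - a) by (unfold x; rewrite norm_axis; apply Rabs_pos_eq; lra).
  assert (Ny : norm n y = 1 - b) by (unfold y; rewrite norm_axis; apply Rabs_pos_eq; lra).
  assert (Bx : in_ball n x) by (unfold in_ball; lra).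
  assert (By : in_ball n y) by (unfold in_ball; lra).
  assert (Dxy : edist n x y = b - a).
  { unfold x, y. rewrite edist_axis, Rabs_pos_eq; lra. }
  assert (Dp : forall c, 0 <= c <= 1 -> edist n (axis (1 - c)) (axis 1) = c).
  { intros c Hc. rewrite edist_axis. replace (1 - c - 1) with (- c) by ring.
    rewrite Rabs_Ropp. apply Rabs_pos_eq. lra. }
  split; [exact Bx | split; [exact By | split; [exact Dxy | split]]].
  - apply Rle_trans with (cass_ratio n x y (axis 1)); [| apply cass_sup_ge, sphere_axis1; auto].
    unfold cass_ratio. rewrite Dxy. unfold x, y. rewrite !Dp by lra.
    replace (a * b) with ((a * q) ^ 2) by (rewrite Hbdef; ring).
    rewrite sqrt_pow2 by nra. right. rewrite Hbdef. field. lra.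
  - unfold hyp_sinh. rewrite Nx, Ny, Dxy.
    set (D := sqrt (1 - (1 - a) ^ 2) * sqrt (1 - (1 - b) ^ 2)).
    assert (HD : a * q * (2 - b) <= D).
    { apply le_of_sq_le; [apply Rmult_le_pos; apply sqrt_pos |].
      unfold D. rewrite !Rpow_mult_distr, !pow2_sqrt by nra.
      replace ((1 - (1 - a) ^ 2) * (1 - (1 - b) ^ 2)) with ((a * q) ^ 2 * ((2 - a) * (2 - b)))
        by (rewrite Hbdef; ring).
      assert ((2 - b) ^ 2 <= (2 - a) * (2 - b)) by nra.
      assert (0 <= (a * q) ^ 2) by apply pow2_ge_0. nra. }
    replace ((q ^ 2 - 1) / q / (2 - b)) with ((b - a) / (a * q * (2 - b)))
      by (rewrite Hbdef; field; repeat split; lra).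
    apply div_le_den; [lra | | exact HD]. apply Rmult_lt_0_compat; nra.
Qed.

Lemma in_ball_antipodal t : 0 <= t < 1 -> in_ball n (axis t) /\ in_ball n (axis (- t)).
Proof. intros Ht. split; apply in_ball_axis; rewrite ?Rabs_Ropp, Rabs_pos_eq; lra. Qed.

Lemma antipodal_hyp_sinh t : 0 <= t < 1 ->
  hyp_sinh n (axis t) (axis (- t)) = 2 * t / (1 - t ^ 2).
Proof.
  intros Ht. unfold hyp_sinh. rewrite !norm_axis, edist_axis, Rabs_Ropp.
  replace (t - - t) with (2 * t) by ring.
  rewrite !Rabs_pos_eq by lra. rewrite sqrt_sqrt by nra. reflexivity.
Qed.

(* For antipodal points |x-p|^2 |y-p|^2 = (1 + t^2)^2 - 4 t^2 p_0^2 >= (1 - t^2)^2. *)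
Lemma antipodal_cass_sup_le t : 0 <= t < 1 ->
  cass_sup n (axis t) (axis (- t)) <= 2 * t / sqrt (1 - t ^ 2).
Proof.
  intros Ht. destruct (in_ball_antipodal t Ht) as [Bx By].
  apply cass_sup_le; auto. intros p Hp. unfold cass_ratio.
  rewrite edist_axis, !edist_axis_sphere by auto.
  replace (t - - t) with (2 * t) by ring. rewrite Rabs_pos_eq by lra.
  pose proof (sphere_coord0_sq p Hp). set (c := p 0%nat) in *.
  assert (0 <= t ^ 2 - 2 * t * c + 1) by (pose proof (pow2_ge_0 (t - c)); nra).
  rewrite <- sqrt_mult_alt by auto.
  apply div_le_den; [lra | apply sqrt_lt_R0; nra |].
  apply sqrt_le_1_alt. apply le_sqrt_of_sq_le; [nra |].
  replace ((t ^ 2 - 2 * t * c + 1) * ((- t) ^ 2 - 2 * (- t) * c + 1))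
    with ((t ^ 2 + 1) ^ 2 - 4 * t ^ 2 * c ^ 2) by ring.
  nra.
Qed.

(* With w = 1 - t in (0, 1/2]: S <= 2 / sqrt w, hence 2 tau <= ln 9 - ln w ... *)
Lemma antipodal_tau_le w : 0 < w <= / 2 ->
  2 * tau_tilde_ball n (axis (1 - w)) (axis (- (1 - w))) <= ln 9 - ln w.
Proof.
  intros Hw. set (t := 1 - w).
  assert (Ht : t = 1 - w) by reflexivity. clearbody t.
  assert (Hsw0 : 0 < sqrt w) by (apply sqrt_lt_R0; lra).
  assert (Hsw1 : sqrt w <= 1) by (apply sqrt_le_of_le_sq; lra).
  assert (Hsw2 : sqrt w ^ 2 = w) by (apply pow2_sqrt; lra).
  destruct (in_ball_antipodal t ltac:(lra)) as [Bx By].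
  assert (HS : cass_sup n (axis t) (axis (- t)) <= 2 / sqrt w).
  { apply Rle_trans with (2 * t / sqrt (1 - t ^ 2)); [apply antipodal_cass_sup_le; lra |].
    assert (sqrt w <= sqrt (1 - t ^ 2)) by (apply sqrt_le_1_alt; rewrite Ht; nra).
    apply Rle_trans with (2 / sqrt (1 - t ^ 2)); [| apply div_le_den; lra].
    apply Rmult_le_compat_r; [left; apply Rinv_0_lt_compat |]; lra. }
  pose proof (cass_sup_nonneg _ _ Bx By) as HS0.
  rewrite tau_tilde_cass. set (S := cass_sup n (axis t) (axis (- t))) in *.
  assert (H1S : 1 + S <= 3 / sqrt w).
  { assert (1 <= 1 / sqrt w) by (apply le_div; lra).
    replace (3 / sqrt w) with (1 / sqrt w + 2 / sqrt w) by (field; lra). lra. }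
  assert (H1S2 : (1 + S) ^ 2 <= 9 / w).
  { replace (9 / w) with ((3 / sqrt w) ^ 2)
      by (unfold Rdiv; rewrite Rpow_mult_distr, pow_inv, Hsw2; ring).
    apply pow_incr; lra. }
  replace (2 * ln (1 + S)) with (ln ((1 + S) ^ 2)) by (rewrite ln_pow by lra; simpl; ring).
  replace (ln 9 - ln w) with (ln (9 / w))
    by (unfold Rdiv; rewrite ln_mult, ln_Rinv by (try apply Rinv_0_lt_compat; lra); ring).
  apply ln_le; nra.
Qed.

(* ... and rho >= - 2 ln w, since 2 sinh(rho/2) = 4t / (w (2 - w)) >= 1/w. *)
Lemma antipodal_rho_ge w : 0 < w <= / 2 ->
  - 2 * ln w <= rho_ball n (axis (1 - w)) (axis (- (1 - w))).
Proof.
  intros Hw. rewrite rho_ball_arcsinh, antipodal_hyp_sinh by lra.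
  set (A := 2 * (1 - w) / (1 - (1 - w) ^ 2)).
  assert (HA : A = 2 * (1 - w) / (w * (2 - w))) by (unfold A; f_equal; ring).
  assert (HA0 : 0 <= A) by (rewrite HA; apply div_nonneg; nra).
  assert (HwA : / w <= 2 * A).
  { rewrite HA, Rmult_div_assoc. apply le_div; [nra |].
    replace (/ w * (w * (2 - w))) with (2 - w) by (field; lra). lra. }
  pose proof (exp_arcsinh_ge_2A A HA0).
  assert (ln (/ w) <= arcsinh A)
    by (rewrite arcsinh_ln; apply ln_le; [apply Rinv_0_lt_compat |]; lra).
  rewrite ln_Rinv in * by lra. lra.
Qed.

(* Sharpness of rho/4 <= tau: antipodal points +-(1 - w) with w -> 0, for
   which 2 tau <= ln 9 + L and rho >= 2 L where w = exp (- L). *)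
Lemma ratio_near_quarter b : / 4 < b -> exists r, ratio_set n r /\ r < b.
Proof.
  intros Hb.
  assert (Hl9 : 0 < ln 9) by (rewrite <- ln_1; apply ln_increasing; lra).
  set (L := ln 9 / (4 * b - 1) + 1).
  assert (HL1 : 1 <= L) by (pose proof (div_nonneg (ln 9) (4 * b - 1)); unfold L; lra).
  assert (HLb : (4 * b - 1) * L = ln 9 + (4 * b - 1)) by (unfold L; field; lra).
  set (w := exp (- L)).
  assert (Hw : 0 < w <= / 2).
  { split; [apply exp_pos |]. unfold w. rewrite exp_Ropp.
    apply Rinv_le_contravar; [lra |]. pose proof (exp_ineq1_le L). lra. }
  assert (Hlnw : ln w = - L) by apply ln_exp.
  pose proof (antipodal_tau_le w Hw) as Htau.
  pose proof (antipodal_rho_ge w Hw) as Hrho.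
  set (x := axis (1 - w)) in *. set (y := axis (- (1 - w))) in *.
  assert (Hd : edist n x y = 2 * (1 - w)).
  { unfold x, y. rewrite edist_axis, Rabs_pos_eq; lra. }
  destruct (in_ball_antipodal (1 - w) ltac:(lra)) as [Bx By].
  exists (tau_tilde_ball n x y / rho_ball n x y). split.
  - exists x, y. repeat split; auto. lra.
  - apply div_lt; nra.
Qed.

(* Sharpness of tau <= rho: nearby radial points close to the boundary. *)
Lemma ratio_near_one M : M < 1 -> exists r, ratio_set n r /\ M < r.
Proof.
  intros HM. set (M' := Rmax M 0).
  assert (HMM' : M <= M') by apply Rmax_l. assert (HM'0 : 0 <= M') by apply Rmax_r.
  assert (HM'1 : M' < 1) by (apply Rmax_lub_lt; lra).
  set (h := Rmin (/ 8) ((1 - M') / 20)).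
  assert (Hh0 : 0 < h) by (apply Rmin_pos; lra).
  assert (Hh1 : h <= / 8) by apply Rmin_l. assert (Hh2 : h <= (1 - M') / 20) by apply Rmin_r.
  destruct (radial_pair h (1 + h) Hh0 ltac:(lra) ltac:(nra)) as [Bx [By [Dxy [HS HA]]]].
  set (x := axis (1 - h)) in *. set (y := axis (1 - h * (1 + h) ^ 2)) in *.
  assert (Hd : 0 < edist n x y) by (rewrite Dxy; nra).
  pose proof (rho_ball_pos n x y Bx By Hd) as Hrho.
  exists (tau_tilde_ball n x y / rho_ball n x y). split.
  - exists x, y. repeat split; auto. lra.
  - apply lt_div; [exact Hrho |].
    assert (M' * rho_ball n x y < tau_tilde_ball n x y).
    { rewrite rho_ball_arcsinh, tau_tilde_cass.
      apply (near_one_scalar M' h); [lra | split; lra | lra | | exact HA | exact HS].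
      apply hyp_sinh_nonneg. }
    nra.
Qed.

(* Sharpness of tau <= rho/2 + ln(5/4): radial points at distances a and 4a
   from the boundary, a -> 0, for which 1 + S >= 5/2 and exp(arcsinh A) -> 2. *)
Lemma gap_near_max M : M < ln (5 / 4) -> exists r, gap_set n r /\ M < r.
Proof.
  intros HM. set (eta := ln (5 / 4) - M).
  set (a := Rmin (/ 8) (eta / 4)).
  assert (Ha0 : 0 < a) by (apply Rmin_pos; unfold eta; lra).
  assert (Ha1 : a <= / 8) by apply Rmin_l. assert (Ha2 : a <= eta / 4) by apply Rmin_r.
  destruct (radial_pair a 2 Ha0 ltac:(lra) ltac:(nra)) as [Bx [By [_ [HS HA]]]].
  set (x := axis (1 - a)) in *. set (y := axis (1 - a * 2 ^ 2)) in *.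
  exists (tau_tilde_ball n x y - / 2 * rho_ball n x y). split; [exists x, y; auto |].
  rewrite tau_tilde_cass, rho_ball_arcsinh.
  set (A := hyp_sinh n x y) in *. set (S := cass_sup n x y) in *.
  replace ((2 ^ 2 - 1) / 2) with (3 / 2) in * by field.
  assert (HA0 : 0 <= A) by apply hyp_sinh_nonneg.
  assert (HA1 : A <= 3 / 4 + 2 * a).
  { apply Rle_trans with (3 / 2 / (2 - a * 2 ^ 2)); auto. apply div_le; nra. }
  assert (HE : exp_arcsinh A <= 2 + 4 * a) by (apply exp_arcsinh_le; nra).
  pose proof (exp_arcsinh_ge1 A HA0).
  assert (ln (5 / 2) <= ln (1 + S)) by (apply ln_le; lra).
  assert (ln (exp_arcsinh A) <= ln (2 + 4 * a)) by (apply ln_le; lra).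
  assert (ln (5 / 2) = ln (5 / 4) + ln 2) by (rewrite <- ln_mult by lra; f_equal; field).
  assert (ln (2 + 4 * a) = ln 2 + ln (1 + 2 * a))
    by (rewrite <- ln_mult by lra; f_equal; ring).
  pose proof (ln_le_sub1 (1 + 2 * a) ltac:(lra)).
  rewrite arcsinh_ln. unfold eta in *. lra.
Qed.

Lemma ratio_set_glb : is_glb (ratio_set n) (/ 4).
Proof.
  apply is_glb_of_approx; [| exact ratio_near_quarter].
  intros r [x [y [Hx [Hy [Hd ->]]]]].
  pose proof (edist_nonneg n x y).
  apply le_div; [apply rho_ball_pos; auto; lra |].
  apply quarter_rho_le_tau; auto.
Qed.

Lemma ratio_set_lub : is_lub (ratio_set n) 1.
Proof.
  apply is_lub_of_approx; [| exact ratio_near_one].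
  intros r [x [y [Hx [Hy [Hd ->]]]]].
  pose proof (edist_nonneg n x y).
  apply div_le; [apply rho_ball_pos; auto; lra |].
  rewrite Rmult_1_l. apply tau_upper_bounds; auto.
Qed.

Lemma gap_set_lub : is_lub (gap_set n) (ln (5 / 4)).
Proof.
  apply is_lub_of_approx; [| exact gap_near_max].
  intros r [x [y [Hx [Hy ->]]]].
  destruct (tau_upper_bounds x y Hx Hy). lra.
Qed.

End Ball.

Theorem theorem4p1 (n : nat) (hn : (2 <= n)%nat) :
  (forall x y, in_ball n x -> in_ball n y ->
     / 4 * rho_ball n x y <= tau_tilde_ball n x y /\
     tau_tilde_ball n x y <= rho_ball n x y /\
     tau_tilde_ball n x y <= / 2 * rho_ball n x y + ln (5 / 4)) /\
  is_glb (fun r => exists x y, in_ball n x /\ in_ball n y /\ edist n x y <> 0 /\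
            r = tau_tilde_ball n x y / rho_ball n x y) (/ 4) /\
  is_lub (fun r => exists x y, in_ball n x /\ in_ball n y /\ edist n x y <> 0 /\
            r = tau_tilde_ball n x y / rho_ball n x y) 1 /\
  is_lub (fun r => exists x y, in_ball n x /\ in_ball n y /\
            r = tau_tilde_ball n x y - / 2 * rho_ball n x y) (ln (5 / 4)).
Proof.
  assert (hn1 : (1 <= n)%nat) by lia.
  split; [| exact (conj (ratio_set_glb n hn1)
                    (conj (ratio_set_lub n hn1) (gap_set_lub n hn1)))].
  intros x y Hx Hy.
  split; [exact (quarter_rho_le_tau n hn1 x y Hx Hy) |].
  exact (tau_upper_bounds n hn1 x y Hx Hy).
Qed.
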